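(* Let $q$ be a prime power, $M\geq2$ an integer with $(M,q)=1$, and $m\geq1$. Let $X\in\mathrm{Sp}(2m,q)$ be conjugate in $\mathrm{GL}(2m,q)$ to the $2m\times 2m$ matrix with $-1$ on the diagonal, $1$ on the superdiagonal and $0$ elsewhere (a single Jordan block with eigenvalue $-1$). Then $X$ is an $M$-th power in $\mathrm{Sp}(2m,q)$ if and only if $M$ is odd.
   Context: $\mathrm{Sp}(2m,q)$ is the symplectic group of a non-degenerate alternating form on $\mathbb{F}_q^{2m}$. An element $X$ of a group $G$ is an $M$-th power in $G$ if $Y^M=X$ for some $Y\in G$. *)

From HB Require Import structures.
From mathcomp Require Import all_boot all_order all_algebra all_fingroup all_field.
Set Implicit Arguments. Unset Strict Implicit. Unset Printing Implicit Defensive.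
Import GRing.Theory.
Local Open Scope ring_scope.

(* Matrix powers for square matrices of arbitrary size n (no ring structure needed). *)
Fixpoint mxpow (F : fieldType) (n : nat) (A : 'M[F]_n) (k : nat) : 'M[F]_n :=
  match k with
  | 0 => 1%:M
  | k'.+1 => A *m mxpow A k'
  end.

Definition nondeg_alternating (F : fieldType) (n : nat) (J : 'M[F]_n) : Prop :=
  J^T = - J /\ (forall i, J i i = 0) /\ J \in unitmx.

Definition symplectic (F : fieldType) (n : nat) (J : 'M[F]_n) (A : 'M[F]_n) : Prop :=
  A *m J *m A^T = J.

Definition jordan_neg1 (F : fieldType) (n : nat) : 'M[F]_n :=
  \matrix_(i < n, j < n)
    (if i == j then -1 else if (j : nat) == (i : nat).+1 then 1 else 0).

Definition is_Mth_power_Sp (F : fieldType) (n : nat) (J : 'M[F]_n) (M : nat)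
  (X : 'M[F]_n) : Prop :=
  exists Y : 'M[F]_n, symplectic J Y /\ mxpow Y M = X.

(* For M odd: X = -U with U unipotent, so X^(2 p^(2m)) = 1 in characteristic p,
   and since M is prime to 2 p^(2m), X = (X^a)^M for a M = 1 modulo that order.
   For M even, q is odd and it suffices to show that X has no symplectic square
   root Z. In a basis where X = S - 1 with S the nilpotent shift, E = S^(2m-1)
   is the matrix unit killed by S on both sides, so every Z commuting with X
   satisfies Z E = E Z = l E, and Z^2 = X gives l^2 = -1. Symplecticity of X
   gives J E^T = -(E J) (because 2m - 1 is odd), and then Z J Z^T = J gives
   E J = l^2 (E J) with E J <> 0, i.e. l^2 = 1: a contradiction since 2 <> 0. *)

From HB Require Import structures.
From mathcomp Require Import all_boot all_order all_algebra all_fingroup all_field.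
From mathcomp Require Import cyclic zify.
Local Open Scope ring_scope.
Import GRing.Theory.
Set Implicit Arguments. Unset Strict Implicit.

Section MxPow.
Variables (F : fieldType) (n : nat).
Implicit Types A B P : 'M[F]_n.

Lemma mxpowSr A k : mxpow A k.+1 = mxpow A k *m A.
Proof.
elim: k => [|k IHk]; first by rewrite /= mulmx1 mul1mx.
change (A *m mxpow A k.+1 = (A *m mxpow A k) *m A).
by rewrite IHk mulmxA.
Qed.

Lemma mxpowD A a b : mxpow A (a + b) = mxpow A a *m mxpow A b.
Proof. by elim: a => [|a IHa] /=; rewrite ?mul1mx // IHa mulmxA. Qed.

Lemma mxpowM A a b : mxpow A (a * b) = mxpow (mxpow A a) b.
Proof. by elim: b => [|b IHb]; rewrite ?muln0 // mulnS mxpowD IHb. Qed.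

Lemma mxpow1n k : mxpow (1%:M : 'M[F]_n) k = 1%:M.
Proof. by elim: k => [|k IHk] //=; rewrite IHk mulmx1. Qed.

Lemma mxpow_comm A B k : A *m B = B *m A -> mxpow A k *m B = B *m mxpow A k.
Proof.
move=> cAB; elim: k => [|k IHk] /=; first by rewrite mul1mx mulmx1.
by rewrite -mulmxA IHk !mulmxA cAB.
Qed.

Lemma mxpow_conj P A k : P \in unitmx ->
  mxpow (P *m A *m invmx P) k = P *m mxpow A k *m invmx P.
Proof.
move=> Pu; elim: k => [|k IHk] /=; first by rewrite mulmx1 mulmxV.
by rewrite IHk !mulmxA mulmxKV.
Qed.

Lemma mxpow_coprime_root A k M : (0 < M)%N -> coprime M k ->
  mxpow A k = 1%:M -> exists a, mxpow (mxpow A a) M = A.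
Proof.
move=> M_gt0 /(coprimeP _ M_gt0)[[a b] /= abMk] Ak1; exists a.
rewrite -mxpowM (_ : (a * M = 1 + b * k)%N); last by lia.
by rewrite mxpowD mulnC mxpowM Ak1 mxpow1n /= !mulmx1.
Qed.

End MxPow.

Lemma mxpowE (F : fieldType) n (A : 'M[F]_n.+1) k : mxpow A k = A ^+ k.
Proof. by elim: k => [|k IHk] //=; rewrite IHk exprS mulmxE. Qed.

Lemma exprB1_pchar (R : nzRingType) p (x : R) e :
  p \in [pchar R] -> (x - 1) ^+ (p ^ e) = x ^+ (p ^ e) - 1.
Proof.
move=> pR; elim: e => [|e IHe]; first by rewrite !expr1.
rewrite expnSr !exprM IHe -!(pFrobenius_autE pR) pFrobenius_autB_comm.
  by rewrite pFrobenius_aut1.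
exact: commr1.
Qed.

Lemma dvdn_pchar_card (R : finNzRingType) p : p \in [pchar R] -> (p %| #|R|)%N.
Proof.
move=> pR; rewrite (dvdn_pcharf pR).
have := @expg_cardG _ [set: R] (1%R : R) (in_setT _).
by rewrite FinRing.zmodXgE cardsT => ->.
Qed.

Lemma natf_neq0_coprime_card (F : finFieldType) k :
  coprime k #|F| -> k%:R != 0 :> F.
Proof.
have [p p_pr pF] := finPcharP F.
move=> co_k; apply/negP => /eqP k0.
have p_dvd_k : (p %| k)%N by rewrite (dvdn_pcharf pF) k0.
by have := coprime_dvdl p_dvd_k co_k; rewrite prime_coprime // dvdn_pchar_card.
Qed.

Section Symplectic.
Variables (F : fieldType) (n : nat).
Implicit Types J A B P : 'M[F]_n.

Lemma symplectic1 J : symplectic J 1%:M.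
Proof. by rewrite /symplectic trmx1 mulmx1 mul1mx. Qed.

Lemma symplectic_mul J A B :
  symplectic J A -> symplectic J B -> symplectic J (A *m B).
Proof.
rewrite /symplectic => sA sB.
by rewrite trmx_mul !mulmxA -[A *m B *m J]mulmxA -[A *m _ *m B^T]mulmxA sB.
Qed.

Lemma symplectic_mxpow J A k : symplectic J A -> symplectic J (mxpow A k).
Proof.
move=> sA; elim: k => [|k IHk] /=; [exact: symplectic1 | exact: symplectic_mul].
Qed.

Lemma symplectic_conjmx J A P : P \in unitmx -> symplectic J A ->
  symplectic (invmx P *m J *m (invmx P)^T) (invmx P *m A *m P).
Proof.
rewrite /symplectic => Pu sA.
rewrite !trmx_mul !mulmxA mulmxK // -[_ *m (invmx P)^T *m P^T]mulmxA.
rewrite -trmx_mul mulmxV // trmx1 mulmx1.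
by rewrite -[in RHS]sA !mulmxA.
Qed.

End Symplectic.

Section ShiftMatrix.
Variables (F : fieldType) (n : nat).

Definition shiftmx : 'M[F]_n := \matrix_(i, j) ((j == i.+1 :> nat)%:R).

Lemma jordan_neg1E : jordan_neg1 F n = shiftmx - 1%:M.
Proof.
apply/matrixP => i j; rewrite !mxE eq_sym.
have [->|ne_ij] := eqVneq j i; last by rewrite subr0; case: ifP.
by rewrite (_ : (i == i.+1 :> nat) = false) ?sub0r // ltn_eqF.
Qed.

Lemma mxpow_shiftmx k :
  mxpow shiftmx k = \matrix_(i, j) ((j == (i + k)%N :> nat)%:R).
Proof.
elim: k => [|k IHk] /=.
  by apply/matrixP => i j; rewrite !mxE addn0 eq_sym.
apply/matrixP => i j; rewrite IHk !mxE.
under eq_bigr do rewrite !mxE.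
have [lt_i1_n|le_n_i1] := ltnP i.+1 n.
  rewrite (bigD1 (Ordinal lt_i1_n)) //= eqxx mul1r big1 ?addr0.
    by rewrite addSnnS.
  move=> l ne_l; case: eqP => [eq_l|]; last by rewrite mul0r.
  by case/eqP: ne_l; apply: val_inj.
rewrite big1; first by case: eqP => // e; have := ltn_ord j; lia.
by move=> l _; case: eqP => [e|]; [have := ltn_ord l; lia | rewrite mul0r].
Qed.

Lemma mxpow_shiftmx_size : mxpow shiftmx n = 0.
Proof.
apply/matrixP => i j; rewrite mxpow_shiftmx !mxE.
by case: eqP => // e; have := ltn_ord j; lia.
Qed.

Lemma mxpow_shiftmx_pred (n_gt0 : (0 < n)%N) (lt_pred_n : (n.-1 < n)%N) :
  mxpow shiftmx n.-1 = delta_mx (Ordinal n_gt0) (Ordinal lt_pred_n).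
Proof.
apply/matrixP => i j; rewrite mxpow_shiftmx !mxE -!val_eqE /=.
have := ltn_ord i; have := ltn_ord j; move: (val i) (val j) => a b lt_a lt_b.
congr (_%:R).
by case: (b =P (a + n.-1)%N); case: (a =P 0%N); case: (b =P n.-1) => /=; lia.
Qed.

End ShiftMatrix.

Lemma jordan_neg1_mxpow_pchar (F : fieldType) n p :
  p \in [pchar F] -> mxpow (jordan_neg1 F n) (p ^ n) = - 1%:M.
Proof.
case: n => [|n] pF; first by apply/matrixP => [[]].
have pM : p \in [pchar 'M[F]_n.+1] by rewrite pchar_lalg.
have n_lt_pn : (n.+1 < p ^ n.+1)%N by rewrite ltn_expl // prime_gt1 // (pcharf_prime pF).
rewrite mxpowE jordan_neg1E exprB1_pchar // -mxpowE -(subnKC (ltnW n_lt_pn)).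
by rewrite mxpowD mxpow_shiftmx_size mul0mx sub0r.
Qed.

Lemma commmx_delta (F : fieldType) n (A : 'M[F]_n) (a b : 'I_n) :
  A *m delta_mx a b = delta_mx a b *m A -> A *m delta_mx a b = A a a *: delta_mx a b.
Proof.
have mulA_deltaE i j : (A *m delta_mx a b) i j = A i a * (j == b)%:R.
  rewrite mxE (bigD1 a) //= mxE eqxx /= big1 ?addr0 // => l ne_la.
  by rewrite mxE (negbTE ne_la) mulr0.
have mul_deltaAE i j : (delta_mx a b *m A) i j = (i == a)%:R * A b j.
  rewrite mxE (bigD1 b) //= mxE eqxx andbT big1 ?addr0 // => l ne_lb.
  by rewrite mxE (negbTE ne_lb) andbF mul0r.
move=> cA; have Aia i : A i a = (i == a)%:R * A b b.
  have := congr1 (fun C : 'M[F]_n => C i b) cA.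
  by rewrite mulA_deltaE mul_deltaAE eqxx mulr1.
apply/matrixP => i j; rewrite mulA_deltaE !mxE !Aia eqxx mul1r.
by case: (i == a); rewrite /= ?mul1r ?mul0r ?mulr0.
Qed.

Section SymplecticTop.
Variables (F : fieldType) (n : nat) (J X : 'M[F]_n).
Hypothesis sX : symplectic J X.

Lemma symplectic_trmx_mxpow_add1 k :
  J *m (mxpow (X + 1%:M) k)^T = mxpow (X + 1%:M) k *m J *m (mxpow X k)^T.
Proof.
have JN : J *m (X + 1%:M)^T = (X + 1%:M) *m J *m X^T.
  by rewrite linearD /= trmx1 mulmxDr mulmxDl !mulmxDl mulmx1 mul1mx sX addrC.
elim: k => [|k IHk]; first by rewrite /= trmx1 mulmx1 mul1mx mulmx1.
have NX : (X + 1%:M) *m X = X *m (X + 1%:M) by rewrite mulmxDr mulmxDl mulmx1 mul1mx.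
rewrite mxpowSr trmx_mul mulmxA JN -mulmxA -trmx_mul (mxpow_comm k NX) trmx_mul.
by rewrite mulmxA -(mulmxA _ J) IHk -mxpowSr /= trmx_mul !mulmxA.
Qed.

Lemma symplectic_left_eigen_neg1 (K : 'M[F]_n) k : K *m X = - K ->
  K *m J *m (mxpow X k)^T = (-1) ^+ k *: (K *m J).
Proof.
move=> KX; have KJX : K *m J *m X^T = - (K *m J).
  by rewrite -{1}[K]opprK -KX !mulNmx -!mulmxA (mulmxA X J) sX.
elim: k => [|k IHk]; first by rewrite /= trmx1 mulmx1 scale1r.
by rewrite mxpowSr trmx_mul mulmxA KJX mulNmx IHk exprS mulN1r scaleNr.
Qed.

End SymplecticTop.

Lemma symplectic_scalar_action_sqr (F : fieldType) n (J Z K : 'M[F]_n) l :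
  J \in unitmx -> K != 0 -> symplectic J Z ->
  Z *m K = l *: K -> K *m Z = l *: K -> J *m K^T = - (K *m J) -> l ^+ 2 = 1.
Proof.
move=> Ju K_neq0 sZ ZK KZ JKT.
have KJ_neq0 : K *m J != 0.
  by apply: contra K_neq0 => /eqP KJ0; rewrite -(mulmxK Ju K) KJ0 mul0mx.
have KJZ : K *m J *m Z^T = l *: (K *m J).
  rewrite -{1}[K *m J]opprK -JKT mulNmx -mulmxA -trmx_mul ZK linearZ /=.
  by rewrite -scalemxAr JKT scalerN opprK.
have : K *m J = l ^+ 2 *: (K *m J).
  by rewrite -{1}sZ !mulmxA KZ -!scalemxAl KJZ scalerA expr2.
move/eqP; rewrite -subr_eq0 -{1}[K *m J]scale1r -scalerBl scaler_eq0.
by rewrite (negbTE KJ_neq0) orbF subr_eq0 eq_sym => /eqP.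
Qed.

Lemma jordan_neg1_no_symplectic_sqrt (F : fieldType) n (J Z : 'M[F]_n) :
  (2 : F) != 0 -> (0 < n)%N -> ~~ odd n -> J \in unitmx ->
  symplectic J (jordan_neg1 F n) -> symplectic J Z -> Z *m Z != jordan_neg1 F n.
Proof.
move=> two_neq0 n_gt0 n_even Ju sX sZ; apply/eqP => ZZ.
set X := jordan_neg1 F n in sX ZZ; set S := shiftmx F n.
have XS : X = S - 1%:M := jordan_neg1E F n.
have lt_pred_n : (n.-1 < n)%N by rewrite ltn_predL.
set E := mxpow S n.-1.
have E_delta : E = delta_mx (Ordinal n_gt0) (Ordinal lt_pred_n).
  exact: mxpow_shiftmx_pred.
have E_neq0 : E != 0.
  rewrite E_delta; apply/eqP => /matrixP/(_ (Ordinal n_gt0) (Ordinal lt_pred_n)).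
  by rewrite !mxE !eqxx; apply/eqP/oner_neq0.
have SE : S *m E = 0.
  by rewrite -[S *m E]/(mxpow S n.-1.+1) prednK // mxpow_shiftmx_size.
have ES : E *m S = 0 by rewrite -mxpowSr prednK // mxpow_shiftmx_size.
have XE : X *m E = - E by rewrite XS mulmxBl SE mul1mx sub0r.
have EX : E *m X = - E by rewrite XS mulmxBr ES mulmx1 sub0r.
have ZS : S *m Z = Z *m S.
  have ZX : Z *m X = X *m Z by rewrite -ZZ mulmxA.
  by rewrite -[S](subrK 1%:M) -XS mulmxDl mulmxDr ZX mulmx1 mul1mx.
pose l := Z (Ordinal n_gt0) (Ordinal n_gt0).
have ZE : Z *m E = l *: E.
  by rewrite E_delta commmx_delta // -E_delta (mxpow_comm _ ZS).
have EZ : E *m Z = l *: E by rewrite (mxpow_comm _ ZS).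
have l2_neg1 : l ^+ 2 = -1.
  have : (l ^+ 2 + 1) *: E = 0.
    by rewrite scalerDl scale1r expr2 -scalerA -ZE scalemxAr -ZE mulmxA ZZ XE addNr.
  by move/eqP; rewrite scaler_eq0 (negbTE E_neq0) orbF addr_eq0 => /eqP.
have JET : J *m E^T = - (E *m J).
  have SX : S = X + 1%:M by rewrite XS subrK.
  rewrite /E SX symplectic_trmx_mxpow_add1 // -SX -/E symplectic_left_eigen_neg1 //.
  have odd_pred_n : odd n.-1 by move: n_even; rewrite -{1}(prednK n_gt0) oddS negbK.
  by rewrite -signr_odd odd_pred_n expr1 scaleN1r.
have l2_1 := symplectic_scalar_action_sqr Ju E_neq0 sZ ZE EZ JET.
by move/eqP: two_neq0; apply; rewrite mulr2n -{1}l2_1 l2_neg1 addNr.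
Qed.

Lemma conj_jordan_neg1_no_symplectic_sqrt (F : fieldType) n (J P Z : 'M[F]_n) :
  (2 : F) != 0 -> (0 < n)%N -> ~~ odd n -> J \in unitmx -> P \in unitmx ->
  symplectic J (P *m jordan_neg1 F n *m invmx P) -> symplectic J Z ->
  Z *m Z != P *m jordan_neg1 F n *m invmx P.
Proof.
move=> two_neq0 n_gt0 n_even Ju Pu sX sZ; apply/eqP => ZZ.
have Ju' : invmx P *m J *m (invmx P)^T \in unitmx.
  by rewrite !unitmx_mul unitmx_tr !unitmx_inv Pu Ju.
have sJ := symplectic_conjmx Pu sX.
rewrite !mulmxA mulVmx // mul1mx mulmxKV // in sJ.
have sZ' := symplectic_conjmx Pu sZ.
apply: (negP (jordan_neg1_no_symplectic_sqrt two_neq0 n_gt0 n_even Ju' sJ sZ')).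
apply/eqP; rewrite !mulmxA mulmxK // -(mulmxA _ Z Z) ZZ !mulmxA mulVmx // mul1mx.
by rewrite mulmxKV.
Qed.

Theorem corollary7p3 (F : finFieldType) (M m : nat) (J : 'M[F]_(2 * m))
  (X : 'M[F]_(2 * m)) :
  (2 <= M)%N -> coprime M #|F| -> (1 <= m)%N ->
  nondeg_alternating J ->
  symplectic J X ->
  (exists P : 'M[F]_(2 * m), P \in unitmx /\ X = P *m jordan_neg1 F (2 * m) *m invmx P) ->
  (is_Mth_power_Sp J M X <-> odd M).
Proof.
move=> M_ge2 coMF m_gt0 [_ [_ Ju]] sX [P [Pu eX]].
have [p _ pF] := finPcharP F.
split => [[Y [sY YM]] | oddM].
  apply/negPn/negP => evenM.
  have two_neq0 : (2 : F) != 0.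
    by apply: natf_neq0_coprime_card; apply: coprime_dvdl coMF; rewrite dvdn2.
  have dim_gt0 : (0 < 2 * m)%N by rewrite muln_gt0.
  have dim_even : ~~ odd (2 * m) by rewrite oddM.
  have sqrtX : mxpow Y M./2 *m mxpow Y M./2 = X by rewrite -mxpowD addnn even_halfK.
  rewrite eX in sX sqrtX; move: sqrtX; apply/eqP.
  exact: conj_jordan_neg1_no_symplectic_sqrt (symplectic_mxpow M./2 sY).
have X_order : mxpow X (p ^ (2 * m) * 2) = 1%:M.
  rewrite eX mxpow_conj // mxpowM jordan_neg1_mxpow_pchar //=.
  by rewrite mulmx1 mulNmx mul1mx opprK mulmx1 mulmxV.
have coM : coprime M (p ^ (2 * m) * 2).
  rewrite coprimeMr coprimen2 oddM andbT coprime_pexpr ?muln_gt0 //.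
  exact: coprime_dvdr (dvdn_pchar_card pF) coMF.
have [a Xa] := mxpow_coprime_root (ltnW M_ge2) coM X_order.
by exists (mxpow X a); split; [exact: symplectic_mxpow |].
Qed.
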